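(* Let $F:\mathcal{P}(V,A)\to S_2(A)$ be a consular election rule satisfying SPP and SPO. Let $P$ be a profile with $F(P)=\{a,b\}$, let $i$ be a voter, $s\in A$, and let $P_i'$ be the linear order obtained from $P_i$ by moving $s$ down some number of positions (the relative order of the other alternatives unchanged). If $s\notin\{a,b\}$, then $F(P_i'P_{-i})=F(P)$. If $s=a$ (the case $s=b$ being symmetric), then either $F(P_i'P_{-i})=F(P)$, or $F(P_i'P_{-i})=\{c,b\}$ for some $c\neq s$; and the latter happens only if $s$ drops below $c$, i.e. $s\succ_i c$ in $P_i$ and $c\succ_i' s$ in $P_i'$.
   Context: $V$ is a finite nonempty set of voters, $A$ a finite set of alternatives; a profile $P$ assigns to each voter $i$ a linear order $P_i$ on $A$; $P_i'P_{-i}$ replaces voter $i$'s order by $P_i'$. $S_2(A)$ is the set of 2-element subsets of $A$; a consular election rule is a map $F:\mathcal{P}(V,A)\to S_2(A)$. SPO: for all $P$, $i$, $P_i'$, $\mathrm{best}(P_i,F(P))\succeq_i\mathrm{best}(P_i,F(P_i'P_{-i}))$; SPP: same with $\mathrm{worst}$, where $\mathrm{best}(P_i,W)$, $\mathrm{worst}(P_i,W)$ are the $P_i$-best and $P_i$-worst elements of $W$. *)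

From mathcomp Require Import all_boot.
Set Implicit Arguments. Unset Strict Implicit. Unset Printing Implicit Defensive.

Section Defs.
Variable A : finType.

(* A linear order on A, given as its ranking list (best first):
   a duplicate-free enumeration of all of A. *)
Definition linorder := {l : seq A | perm_eq l (enum A)}.

Definition prefers (L : linorder) (x y : A) : bool :=
  index x (val L) < index y (val L).
Definition wprefers (L : linorder) (x y : A) : bool :=
  index x (val L) <= index y (val L).

Definition is_best (L : linorder) (W : {set A}) (x : A) : Prop :=
  x \in W /\ forall y, y \in W -> wprefers L x y.
Definition is_worst (L : linorder) (W : {set A}) (x : A) : Prop :=
  x \in W /\ forall y, y \in W -> wprefers L y x.

Definition move_down (l : seq A) (s : A) (k : nat) : seq A :=
  let l' := rem s l in
  take (index s l + k) l' ++ s :: drop (index s l + k) l'.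
End Defs.

Section Rules.
Variables (V A : finType).
Definition profile := V -> linorder A.

Definition upd (P : profile) (i : V) (Li : linorder A) : profile :=
  fun j => if j == i then Li else P j.

Definition consular (F : profile -> {set A}) : Prop :=
  forall P, #|F P| = 2.

Definition SPO (F : profile -> {set A}) : Prop :=
  forall P i Li' x y, is_best (P i) (F P) x ->
    is_best (P i) (F (upd P i Li')) y -> wprefers (P i) x y.

Definition SPP (F : profile -> {set A}) : Prop :=
  forall P i Li' x y, is_worst (P i) (F P) x ->
    is_worst (P i) (F (upd P i Li')) y -> wprefers (P i) x y.
End Rules.

(* SPO and SPP, applied to the manipulation P -> P' and to its reversal P' -> P,
   say that F(P) lies weakly above F(P') in P_i and F(P') weakly above F(P) in
   P_i', comparing best with best and worst with worst.  Moving s down is a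
   sequence of exchanges of s with its current successor t, and for a single
   exchange the two orders differ only on {s, t}: the two dominances then force
   F(P') = F(P), except that when s is in F(P) it may be replaced by t.  Once s
   has left the outcome, later exchanges no longer change it, and the
   alternative that replaced s stays above s. *)

From mathcomp Require Import all_boot zify.
From Stdlib Require Import FunctionalExtensionality.
Set Implicit Arguments. Unset Strict Implicit. Unset Printing Implicit Defensive.

Notation rank L x := (index x (val L)).

(* On the ranks of two outcomes, SPO compares the minima and SPP the maxima. *)
Definition pair_le (x y u v : nat) := (minn x y <= minn u v) && (maxn x y <= maxn u v).
Definition same_pair (u v x y : nat) := (u == x) && (v == y) || (u == y) && (v == x).
Definition swap_adj (n x : nat) := if x == n then n.+1 else if x == n.+1 then n else x.

Lemma swap_adjP n x : [\/ x = n /\ swap_adj n x = n.+1, x = n.+1 /\ swap_adj n x = n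
  | [/\ x <> n, x <> n.+1 & swap_adj n x = x]].
Proof.
rewrite /swap_adj; case: eqP => [-> | ?]; first by constructor 1.
by case: eqP => [-> | ?]; [constructor 2 | constructor 3].
Qed.

Lemma swap_pair_fixed n x y u v : x != y -> u != v -> x != n -> y != n ->
  pair_le x y u v -> pair_le (swap_adj n u) (swap_adj n v) (swap_adj n x) (swap_adj n y) ->
  same_pair u v x y.
Proof.
rewrite /pair_le /same_pair.
case: (swap_adjP n u) => [[-> ->]|[-> ->]|[? ? ->]];
case: (swap_adjP n v) => [[-> ->]|[-> ->]|[? ? ->]];
case: (swap_adjP n x) => [[-> ->]|[-> ->]|[? ? ->]];
case: (swap_adjP n y) => [[-> ->]|[-> ->]|[? ? ->]]; lia.
Qed.

Lemma swap_pair_moved n y u v : y != n -> u != v ->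
  pair_le n y u v -> pair_le (swap_adj n u) (swap_adj n v) (swap_adj n n) (swap_adj n y) ->
  same_pair u v n y || same_pair u v n.+1 y.
Proof.
have -> : swap_adj n n = n.+1 by rewrite /swap_adj eqxx.
rewrite /pair_le /same_pair.
case: (swap_adjP n u) => [[-> ->]|[-> ->]|[? ? ->]];
case: (swap_adjP n v) => [[-> ->]|[-> ->]|[? ? ->]];
case: (swap_adjP n y) => [[-> ->]|[-> ->]|[? ? ->]]; lia.
Qed.

Section Linorder.
Variable A : finType.
Implicit Types (L : linorder A) (p q : seq A) (s x : A).

Lemma mem_linorder L x : x \in val L.
Proof. by rewrite (perm_mem (valP L)) mem_enum. Qed.

Lemma linorder_uniq L : uniq (val L).
Proof. by rewrite (perm_uniq (valP L)) enum_uniq. Qed.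

Lemma rank_inj L : injective (fun x => rank L x).
Proof. by move=> x y; apply: (index_inj x); rewrite mem_linorder. Qed.

Lemma rank_eq L x y : (rank L x == rank L y) = (x == y).
Proof. exact: (inj_eq (@rank_inj L)). Qed.

Lemma linorder_split L s : exists p q, val L = p ++ s :: q /\ s \notin p.
Proof.
move: (linorder_uniq L); case/splitPr: (mem_linorder L s) => p q.
by rewrite cat_uniq => /and3P [_ /norP [sp _] _]; exists p, q.
Qed.

Lemma is_best_set2 L u v :
  exists2 x, is_best L [set u; v] x & rank L x = minn (rank L u) (rank L v).
Proof.
have [uv | vu] := leqP (rank L u) (rank L v); [exists u | exists v]; try lia;
  split=> [|y]; rewrite ?set21 ?set22 // in_set2 => /orP [] /eqP ->; rewrite /wprefers; lia.
Qed.

Lemma is_worst_set2 L u v :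
  exists2 x, is_worst L [set u; v] x & rank L x = maxn (rank L u) (rank L v).
Proof.
have [uv | vu] := leqP (rank L u) (rank L v); [exists v | exists u]; try lia;
  split=> [|y]; rewrite ?set21 ?set22 // in_set2 => /orP [] /eqP ->; rewrite /wprefers; lia.
Qed.

Lemma set2_eq_of_ranks L a b c d :
  same_pair (rank L c) (rank L d) (rank L a) (rank L b) -> [set c; d] = [set a; b].
Proof.
rewrite /same_pair !rank_eq.
by case/orP => /andP [/eqP -> /eqP ->]; rewrite // setUC.
Qed.

Lemma index_before_mid p r s x : s \notin p ->
  (index x (p ++ s :: r) < index s (p ++ s :: r)) = (x \in p).
Proof.
move=> sp; rewrite !index_cat (negbTE sp) /= eqxx addn0.
by case: ifP => xp; [rewrite index_mem | rewrite ltnNge leq_addr].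
Qed.

End Linorder.

Section MoveDown.
Variable A : finType.
Implicit Types (L : linorder A) (p q : seq A) (s x : A).

Lemma move_down_cat p q s k : s \notin p ->
  move_down (p ++ s :: q) s k = p ++ take k q ++ s :: drop k q.
Proof.
move=> sp; rewrite /move_down index_cat (negbTE sp) /= eqxx addn0.
have -> : rem s (p ++ s :: q) = p ++ q.
  rewrite remE index_cat (negbTE sp) /= eqxx addn0 take_size_cat // drop_cat.
  by rewrite ltnNge leqnSn subSnn /= drop0.
by rewrite take_cat drop_cat ltnNge leq_addr /= addKn catA.
Qed.

Lemma perm_move_down L s k : perm_eq (move_down (val L) s k) (enum A).
Proof.
have [p [q [Ls sp]]] := linorder_split L s.
apply: perm_trans (valP L); rewrite Ls move_down_cat // perm_cat2l.
by rewrite -cat1s perm_catCA cat_take_drop.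
Qed.

Definition lin_move_down L s k : linorder A :=
  exist (fun l => perm_eq l (enum A)) _ (perm_move_down L s k).

Lemma lin_move_down0 L s : lin_move_down L s 0 = L.
Proof.
have [p [q [Ls sp]]] := linorder_split L s.
by apply: val_inj; rewrite /= Ls move_down_cat // take0 drop0.
Qed.

Lemma lin_move_downS L s k :
  lin_move_down L s k.+1 = lin_move_down L s k \/
  exists pre t post, val (lin_move_down L s k) = pre ++ s :: t :: post /\
                     val (lin_move_down L s k.+1) = pre ++ t :: s :: post.
Proof.
have [p [q [Ls sp]]] := linorder_split L s.
have [qk | kq] := leqP (size q) k.
  left; apply: val_inj; rewrite /= Ls !move_down_cat //.
  by rewrite !take_oversize ?drop_oversize //; lia.
right; exists (p ++ take k q), (nth s q k), (drop k.+1 q).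
by rewrite /= Ls !move_down_cat // (drop_nth s kq) (take_nth s kq) -cats1 -!catA.
Qed.

Lemma prefers_lin_move_down L s k x : x != s ->
  prefers (lin_move_down L s k) x s = (rank L x <= rank L s + k).
Proof.
move=> xs; have [p [q [Ls sp]]] := linorder_split L s.
have xpq : x \in p ++ q.
  by move: (mem_linorder L x); rewrite Ls mem_cat in_cons (negbTE xs) mem_cat.
have spq : s \notin p ++ take k q.
  move: (linorder_uniq L); rewrite Ls cat_uniq /= => /and4P [_ _ sq _].
  by rewrite mem_cat negb_or sp /=; apply: contra sq; apply: mem_take.
rewrite /prefers /= Ls move_down_cat // catA index_before_mid // mem_cat.
rewrite !index_cat (negbTE sp) /= eqxx addn0 eq_sym (negbTE xs).
case: ifP => xp; first by rewrite /= (leq_trans (index_size x p)) ?leq_addr.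
have xq : x \in q by move: xpq; rewrite mem_cat xp.
by rewrite (in_take k xq) addnS ltn_add2l.
Qed.

End MoveDown.

Section SwapRanks.
Variables (A : finType) (L L' : linorder A) (pre post : seq A) (s t : A).
Hypotheses (Ls : val L = pre ++ s :: t :: post) (L's : val L' = pre ++ t :: s :: post).

Lemma swap_uniq : [/\ s \notin pre, t \notin pre & s != t].
Proof.
move: (linorder_uniq L); rewrite Ls cat_uniq /= !in_cons !negb_or.
by case/and5P => _ /and3P [sp tp _] /andP [st _] _ _.
Qed.

Lemma rank_swap_s : rank L s = size pre.
Proof. by have [sp _ _] := swap_uniq; rewrite Ls index_cat (negbTE sp) /= eqxx addn0. Qed.

Lemma rank_swap_t : rank L t = (size pre).+1.
Proof.
have [_ tp st] := swap_uniq.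
by rewrite Ls index_cat (negbTE tp) /= (negbTE st) eqxx addn1.
Qed.

Lemma rank_swap x : rank L' x = swap_adj (size pre) (rank L x).
Proof.
have [sp tp st] := swap_uniq; have ts : t != s by rewrite eq_sym.
rewrite /swap_adj -rank_swap_t -rank_swap_s !rank_eq Ls L's.
have [-> | xs] := eqVneq x s.
  by rewrite !index_cat (negbTE sp) (negbTE tp) /= eqxx (negbTE st) (negbTE ts) eqxx addn1.
have [-> | xt] := eqVneq x t.
  by rewrite !index_cat (negbTE sp) (negbTE tp) /= !eqxx.
by rewrite !index_cat /= ![_ == x]eq_sym (negbTE xs) (negbTE xt).
Qed.

Lemma swap_prefers : prefers L s t /\ prefers L' t s.
Proof. by rewrite /prefers !rank_swap rank_swap_s rank_swap_t /swap_adj !eqxx (gtn_eqF (ltnSn _)). Qed.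

End SwapRanks.

Section Profiles.
Variables (V A : finType).
Implicit Types (P : profile V A) (L : linorder A).

Lemma upd_same P i L : upd P i L i = L.
Proof. by rewrite /upd eqxx. Qed.

Lemma upd_upd P i L L' : upd (upd P i L) i L' = upd P i L'.
Proof. by apply: functional_extensionality => j; rewrite /upd; case: eqP. Qed.

Lemma upd_id P i : upd P i (P i) = P.
Proof. by apply: functional_extensionality => j; rewrite /upd; case: eqP => // ->. Qed.

End Profiles.

Section Outcome.
Variables (V A : finType) (F : profile V A -> {set A}).
Hypotheses (consF : consular F) (sppF : SPP F) (spoF : SPO F).

Lemma consular_neq P a b : F P = [set a; b] -> a != b.
Proof. by move=> FP; apply/eqP => ab; move: (consF P); rewrite FP ab setUid cards1. Qed.

Lemma outcome_pair_le P i L a b c d :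
  F P = [set a; b] -> F (upd P i L) = [set c; d] ->
  pair_le (rank (P i) a) (rank (P i) b) (rank (P i) c) (rank (P i) d).
Proof.
move=> FP FP'.
have [x bx rx] := is_best_set2 (P i) a b; have [y byy ry] := is_best_set2 (P i) c d.
have [x' wx rx'] := is_worst_set2 (P i) a b; have [y' wy ry'] := is_worst_set2 (P i) c d.
rewrite -FP in bx wx; rewrite -FP' in byy wy.
rewrite /pair_le -rx -ry -rx' -ry'.
by apply/andP; split; [exact: spoF bx byy | exact: sppF wx wy].
Qed.

Lemma outcome_pair_le_back P i L a b c d :
  F P = [set a; b] -> F (upd P i L) = [set c; d] ->
  pair_le (rank L c) (rank L d) (rank L a) (rank L b).
Proof.
move=> FP FP'; rewrite -[L](upd_same P i).
by apply: (outcome_pair_le (L := P i)) => //; rewrite upd_upd upd_id.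
Qed.

Section Swap.
Variables (P : profile V A) (i : V) (L' : linorder A) (pre post : seq A) (s t : A).
Hypotheses (Ps : val (P i) = pre ++ s :: t :: post) (L's : val L' = pre ++ t :: s :: post).

Lemma swap_outcome a b : F P = [set a; b] ->
  exists c d, [/\ F (upd P i L') = [set c; d], c != d,
    pair_le (rank (P i) a) (rank (P i) b) (rank (P i) c) (rank (P i) d) &
    pair_le (swap_adj (size pre) (rank (P i) c)) (swap_adj (size pre) (rank (P i) d))
            (swap_adj (size pre) (rank (P i) a)) (swap_adj (size pre) (rank (P i) b))].
Proof.
move=> FP; have /cards2P [c [d [cd FP']]] : #|F (upd P i L')| == 2 by rewrite consF.
exists c, d; split => //; first exact: outcome_pair_le FP FP'.
by rewrite -!(rank_swap Ps L's); exact: outcome_pair_le_back FP FP'.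
Qed.

Lemma swap_outcome_fixed a b : F P = [set a; b] -> s \notin [set a; b] -> F (upd P i L') = F P.
Proof.
move=> FP; rewrite in_set2 negb_or => /andP [sa sb].
have [c [d [-> cd le le']]] := swap_outcome FP.
rewrite FP; apply: (set2_eq_of_ranks (L := P i)).
apply: swap_pair_fixed le le'; rewrite -?(rank_swap_s Ps) rank_eq.
- exact: consular_neq FP.
- done.
- by rewrite eq_sym.
- by rewrite eq_sym.
Qed.

Lemma swap_outcome_moved b :
  F P = [set s; b] -> F (upd P i L') = F P \/ F (upd P i L') = [set t; b].
Proof.
move=> FP; have [c [d [-> cd le le']]] := swap_outcome FP.
have bs : rank (P i) b != size pre by rewrite -(rank_swap_s Ps) rank_eq eq_sym (consular_neq FP).
rewrite (rank_swap_s Ps) in le le'.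
have rcd : rank (P i) c != rank (P i) d by rewrite rank_eq.
case/orP: (swap_pair_moved bs rcd le le') => same.
- by left; rewrite FP; apply: (set2_eq_of_ranks (L := P i)); rewrite (rank_swap_s Ps).
- by right; apply: (set2_eq_of_ranks (L := P i)); rewrite (rank_swap_t Ps).
Qed.

End Swap.

Section MoveDownOutcome.
Variables (P : profile V A) (i : V) (s : A).

Lemma move_down_outcome_fixed a b n : F P = [set a; b] -> s \notin [set a; b] ->
  F (upd P i (lin_move_down (P i) s n)) = F P.
Proof.
move=> FP sab; elim: n => [|n IH]; first by rewrite lin_move_down0 upd_id.
have [-> // | [pre [t [post [Ln Ln1]]]]] := lin_move_downS (P i) s n.
have Ps : val (upd P i (lin_move_down (P i) s n) i) = pre ++ s :: t :: post by rewrite upd_same.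
rewrite -(upd_upd P i (lin_move_down (P i) s n)) -IH in FP *.
exact: (swap_outcome_fixed (P := upd P i (lin_move_down (P i) s n)) Ps Ln1 FP sab).
Qed.

Lemma move_down_outcome_moved b n : F P = [set s; b] ->
  F (upd P i (lin_move_down (P i) s n)) = F P \/
  exists c, c != s /\ F (upd P i (lin_move_down (P i) s n)) = [set c; b] /\
            prefers (P i) s c /\ prefers (lin_move_down (P i) s n) c s.
Proof.
move=> FP; elim: n => [|n IH]; first by left; rewrite lin_move_down0 upd_id.
have [-> // | [pre [t [post [Ln Ln1]]]]] := lin_move_downS (P i) s n.
have Ps : val (upd P i (lin_move_down (P i) s n) i) = pre ++ s :: t :: post by rewrite upd_same.
rewrite -(upd_upd P i (lin_move_down (P i) s n)).
case: IH => [FPn | [c [cs [FPn [sc cs_n]]]]].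
  rewrite -FPn in FP; case: (swap_outcome_moved Ps Ln1 FP) => FP'; first by left; rewrite FP'.
  have [[_ _ st] [st_n ts_n1]] := (swap_uniq Ln, swap_prefers Ln Ln1).
  have ts : t != s by rewrite eq_sym.
  right; exists t; do !split => //.
  (* t is below s in L_n, hence also in P i, since s only sinks *)
  have ts_n : ~~ prefers (lin_move_down (P i) s n) t s by move: st_n; rewrite /prefers; lia.
  by move: ts_n; rewrite prefers_lin_move_down // /prefers; lia.
right; exists c; split => //; split.
  have bs : b != s by rewrite eq_sym (consular_neq FP).
  by rewrite (swap_outcome_fixed Ps Ln1 FPn) // in_set2 negb_or ![s == _]eq_sym cs bs.
split => //; move: cs_n; rewrite !prefers_lin_move_down //; lia.
Qed.

End MoveDownOutcome.

End Outcome.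

Theorem lemma12 (V A : finType) (F : profile V A -> {set A}) :
  0 < #|V| -> consular F -> SPP F -> SPO F ->
  forall (P : profile V A) (a b : A) (i : V) (s : A) (k : nat)
         (Li' : linorder A),
    F P = [set a; b] ->
    val Li' = move_down (val (P i)) s k ->
    (s \notin [set a; b] -> F (upd P i Li') = F P) /\
    (s = a ->
       F (upd P i Li') = F P \/
       exists c : A, c != s /\ F (upd P i Li') = [set c; b] /\
                     prefers (P i) s c /\ prefers Li' c s).
Proof.
move=> _ consF sppF spoF P a b i s k Li' FP Li's.
have -> : Li' = lin_move_down (P i) s k by exact: val_inj.
split=> [sab | sa]; first exact: move_down_outcome_fixed FP sab.
by subst a; apply: move_down_outcome_moved.
Qed.
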